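(* Let $G$ be a finite connected graph and $\alpha\ge 1$ an integer. If $H$ is the disjoint union of $\alpha$ copies of $G$, then $D(H)=\min\{k : D(G,k)\ge \alpha\}$.
   Context: A $k$-labeling of a graph $G$ is a map $\phi:V(G)\to\{1,\dots,k\}$; an automorphism $\pi$ preserves $\phi$ if $\phi(\pi(v))=\phi(v)$ for all $v$; $\phi$ is distinguishing if only the identity automorphism preserves it. Two distinguishing $k$-labelings $\phi,\phi'$ are equivalent if some automorphism $\pi$ satisfies $\phi'(\pi(v))=\phi(v)$ for all $v$; $D(G,k)$ is the number of equivalence classes of distinguishing $k$-labelings of $G$. $D(H)$ is the smallest $k$ such that $H$ has a distinguishing $k$-labeling. *)

From mathcomp Require Import all_boot all_order all_fingroup.
Set Implicit Arguments. Unset Strict Implicit. Unset Printing Implicit Defensive.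

(* A finite simple graph is a finType T with a symmetric irreflexive e : rel T. *)

Definition is_aut (T : finType) (e : rel T) (p : {perm T}) : bool :=
  [forall x, forall y, e (p x) (p y) == e x y].

(* A k-labeling uses labels 'I_k = {0,..,k-1} (in bijection with {1,..,k}). *)
Definition preserves (T : finType) (k : nat) (p : {perm T}) (phi : {ffun T -> 'I_k}) : bool :=
  [forall v, phi (p v) == phi v].

Definition distinguishing (T : finType) (e : rel T) (k : nat) (phi : {ffun T -> 'I_k}) : bool :=
  [forall p : {perm T}, (is_aut e p && preserves p phi) ==> (p == 1%g)].

Definition equiv_lab (T : finType) (e : rel T) (k : nat) (phi phi' : {ffun T -> 'I_k}) : bool :=
  [exists p : {perm T}, is_aut e p && [forall v, phi' (p v) == phi v]].

Definition D_count (T : finType) (e : rel T) (k : nat) : nat :=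
  #|[set [set phi' | equiv_lab e phi phi'] | phi in [set phi : {ffun T -> 'I_k} | distinguishing e phi]]|.

Definition has_dist_lab (T : finType) (e : rel T) (k : nat) : bool :=
  [exists phi : {ffun T -> 'I_k}, distinguishing e phi].

Definition union_rel (a : nat) (T : finType) (e : rel T) : rel ('I_a * T) :=
  fun u v => (u.1 == v.1) && e u.2 v.2.

Definition is_min (P : nat -> Prop) (m : nat) : Prop :=
  P m /\ forall k, P k -> m <= k.

From mathcomp Require Import all_boot all_order all_fingroup.
Set Implicit Arguments. Unset Strict Implicit. Unset Printing Implicit Defensive.

(* Since G is connected, every automorphism of the union of alpha copies of G
   permutes the copies and acts on each of them by an automorphism of G. Hence a
   labeling of the union is distinguishing iff its restrictions to the copies are
   distinguishing and pairwise inequivalent: an equivalence between two copies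
   yields an automorphism swapping them, and a nontrivial automorphism fixing the
   labeling either moves a copy onto another one or fixes a copy's labeling
   nontrivially. So the union has a distinguishing k-labeling iff alpha <= D(G, k). *)

Section Automorphisms.

Variables (T : finType) (e : rel T).

Lemma autP (p : {perm T}) : reflect (forall x y, e (p x) (p y) = e x y) (is_aut e p).
Proof.
apply: (iffP forallP) => [H x y | H x]; first exact/eqP/(forallP (H x) y).
by apply/forallP => y; rewrite H.
Qed.

Lemma aut1 : is_aut e 1%g.
Proof. by apply/autP => x y; rewrite !perm1. Qed.

Lemma autV (p : {perm T}) : is_aut e p -> is_aut e p^-1%g.
Proof.
move/autP=> Hp; apply/autP => x y.
by rewrite -[in RHS](permKV p x) -[in RHS](permKV p y) Hp.
Qed.

Lemma autM (p q : {perm T}) : is_aut e p -> is_aut e q -> is_aut e (p * q)%g.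
Proof. by move=> /autP Hp /autP Hq; apply/autP => x y; rewrite !permM Hq Hp. Qed.

End Automorphisms.

Section Equivalence.

Variables (T : finType) (e : rel T) (k : nat).
Implicit Types phi psi : {ffun T -> 'I_k}.

Lemma equiv_lab_refl phi : equiv_lab e phi phi.
Proof. by apply/existsP; exists 1%g; rewrite aut1; apply/forallP => v; rewrite perm1. Qed.

Lemma equiv_lab_class phi psi : equiv_lab e phi psi ->
  [set chi | equiv_lab e phi chi] = [set chi | equiv_lab e psi chi].
Proof.
case/existsP => p /andP [pA /forallP pP].
apply/setP => chi; rewrite !inE; apply/existsP/existsP.
- case=> r /andP [rA /forallP rP]; exists (p^-1 * r)%g; rewrite autM ?autV //=.
  by apply/forallP => v; rewrite permM (eqP (rP _)) -(eqP (pP (p^-1 v)%g)) permKV.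
- case=> r /andP [rA /forallP rP]; exists (p * r)%g; rewrite autM //=.
  by apply/forallP => v; rewrite permM (eqP (rP _)) (eqP (pP _)).
Qed.

Lemma D_count_geP n : n <= D_count e k <->
  exists f : 'I_n -> {ffun T -> 'I_k},
    (forall i, distinguishing e (f i)) /\ (forall i j, equiv_lab e (f i) (f j) -> i = j).
Proof.
rewrite /D_count; set S := [set _ | _ in _]; split.
- move=> leS.
  have nthS (i : 'I_n) : exists phi, distinguishing e phi &&
      (nth set0 (enum S) (val i) == [set chi | equiv_lab e phi chi]).
    have : nth set0 (enum S) i \in S.
      by rewrite -mem_enum mem_nth // -cardE (leq_trans (ltn_ord i)).
    by case/imsetP => phi; rewrite inE => dphi ->; exists phi; rewrite dphi eqxx.
  have [f Hf] := fin_all_exists nthS.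
  exists f; split=> [i | i j /equiv_lab_class]; first by case/andP: (Hf i).
  case/andP: (Hf i) => _ /eqP <-; case/andP: (Hf j) => _ /eqP <- /eqP.
  rewrite nth_uniq ?enum_uniq -?cardE ?(leq_trans (ltn_ord _) leS) //.
  by move/eqP/val_inj.
- case=> f [fD fI].
  have classI : injective (fun i => [set chi | equiv_lab e (f i) chi]).
    move=> i j /= Eij; apply: fI.
    by have := equiv_lab_refl (f j); rewrite -in_set -Eij inE.
  rewrite -[n]card_ord -(card_imset _ classI); apply/subset_leq_card.
  by apply/subsetP => _ /imsetP [i _ ->]; apply/imsetP; exists (f i); rewrite ?inE.
Qed.

End Equivalence.

Section DisjointUnion.

Variables (a : nat) (T : finType) (e : rel T).

Definition copy_lab k (Phi : {ffun 'I_a * T -> 'I_k}) (i : 'I_a) : {ffun T -> 'I_k} :=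
  [ffun x => Phi (i, x)].

Definition union_perm_fun (s : {perm 'I_a}) (q : 'I_a -> {perm T}) (u : 'I_a * T) :=
  (s u.1, q u.1 u.2).

Lemma union_perm_fun_inj s q : injective (union_perm_fun s q).
Proof. by move=> [i x] [j y] [/perm_inj -> /perm_inj ->]. Qed.

Definition union_perm s q : {perm 'I_a * T} := perm (@union_perm_fun_inj s q).

Lemma union_permE s q u : union_perm s q u = (s u.1, q u.1 u.2).
Proof. by rewrite permE. Qed.

Lemma union_perm_aut s q :
  (forall i, is_aut e (q i)) -> is_aut (union_rel e) (union_perm s q).
Proof.
move=> qA; apply/autP => -[i x] [j y]; rewrite !union_permE /union_rel /=.
by rewrite (inj_eq perm_inj); case: eqP => [<- | //]; have /autP -> := qA i.
Qed.

Section CopyDistinguishing.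

Variables (k : nat) (Phi : {ffun 'I_a * T -> 'I_k}).
Hypothesis PhiD : distinguishing (union_rel e) Phi.

Lemma union_perm_fixed s q :
    (forall i, is_aut e (q i)) -> preserves (union_perm s q) Phi ->
  union_perm s q = 1%g.
Proof. by move=> qA qP; apply/eqP/(implyP (forallP PhiD _)); rewrite union_perm_aut. Qed.

Lemma distinguishing_copy i : distinguishing e (copy_lab Phi i).
Proof.
apply/forallP => p; apply/implyP => /andP [pA /forallP pP].
pose q j := if j == i then p else 1%g.
have qA j : is_aut e (q j) by rewrite /q; case: ifP; rewrite ?aut1.
have /permP fix1 : union_perm 1 q = 1%g.
  apply: union_perm_fixed => //; apply/forallP => -[j x].
  rewrite union_permE perm1 /q /=; case: (j =P i) => [-> | _]; last by rewrite perm1.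
  by have := pP x; rewrite !ffunE.
apply/eqP/permP => x; have := fix1 (i, x).
by rewrite union_permE /q /= eqxx !perm1 => -[].
Qed.

Variable x0 : T.

(* Swapping copies i and j through an equivalence p yields an automorphism
   preserving Phi that moves (i, x0). *)
Lemma copy_lab_equiv_inj i j : equiv_lab e (copy_lab Phi i) (copy_lab Phi j) -> i = j.
Proof.
case/existsP => p /andP [pA /forallP pP]; apply/eqP; apply: contraT => nij.
pose q l := if l == i then p else if l == j then p^-1%g else 1%g.
have qA l : is_aut e (q l).
  by rewrite /q; case: ifP => _; last case: ifP => _; rewrite ?autV ?aut1.
have /permP swap1 : union_perm (tperm i j) q = 1%g.
  apply: union_perm_fixed => //; apply/forallP => -[l x]; rewrite union_permE /= /q.
  case: (l =P i) => [-> | /eqP nli]; first by rewrite tpermL; have := pP x; rewrite !ffunE.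
  case: (l =P j) => [-> | /eqP nlj].
    by rewrite tpermR; have := pP (p^-1 x)%g; rewrite !ffunE permKV eq_sym.
  by rewrite tpermD ?perm1 // eq_sym.
have := swap1 (i, x0); rewrite union_permE perm1 tpermL => -[eji _].
by rewrite eji eqxx in nij.
Qed.

End CopyDistinguishing.

Section UnionAutomorphism.

Hypothesis econn : forall x y : T, connect e x y.
Variable P : {perm 'I_a * T}.
Hypothesis PA : is_aut (union_rel e) P.

(* Edges stay inside a copy, so connectivity of G keeps each copy in one copy. *)
Lemma union_aut_fst i x y : (P (i, x)).1 = (P (i, y)).1.
Proof.
case/connectP: (econn x y) => p + ->{y}; elim: p x => [|z p IH] x //= /andP [exz zp].
rewrite -(IH z zp); have /autP PE := PA.
by have /andP [/eqP] : union_rel e (P (i, x)) (P (i, z)) by rewrite PE /union_rel /= eqxx.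
Qed.

Lemma union_aut_snd_inj i : injective (fun y => (P (i, y)).2).
Proof.
move=> y z /= Eyz; suff /perm_inj [] : P (i, y) = P (i, z) by [].
by rewrite [P (i, y)]surjective_pairing [P (i, z)]surjective_pairing Eyz (union_aut_fst i y z).
Qed.

Definition copy_aut i : {perm T} := perm (@union_aut_snd_inj i).

Lemma copy_autE i y : P (i, y) = ((P (i, y)).1, copy_aut i y).
Proof. by rewrite permE -surjective_pairing. Qed.

Lemma copy_aut_aut i : is_aut e (copy_aut i).
Proof.
have /autP PE := PA; apply/autP => y z; have := PE (i, y) (i, z).
rewrite [P (i, y)]copy_autE [P (i, z)]copy_autE /union_rel /=.
by rewrite (union_aut_fst i y z) !eqxx.
Qed.

End UnionAutomorphism.

Lemma distinguishing_of_copies (econn : forall x y : T, connect e x y)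
    k (Phi : {ffun 'I_a * T -> 'I_k}) :
    (forall i, distinguishing e (copy_lab Phi i)) ->
    (forall i j, equiv_lab e (copy_lab Phi i) (copy_lab Phi j) -> i = j) ->
  distinguishing (union_rel e) Phi.
Proof.
move=> copyD copyI; apply/forallP => P; apply/implyP => /andP [PA /forallP PP].
apply/eqP/permP => -[i x]; rewrite perm1.
set q := copy_aut econn PA i; set j := (P (i, x)).1.
have Pi y : P (i, y) = (j, q y) by rewrite copy_autE (union_aut_fst econn PA i y x).
have qP y : copy_lab Phi j (q y) = copy_lab Phi i y.
  by have := PP (i, y); rewrite Pi !ffunE => /eqP.
have qA : is_aut e q := copy_aut_aut econn PA i.
have ji : j = i.
  by apply/esym/copyI/existsP; exists q; rewrite qA; apply/forallP => y; rewrite qP.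
have q1 : q = 1%g.
  apply/eqP/(implyP (forallP (copyD i) q)); rewrite qA.
  by apply/forallP => y; rewrite -{1}ji qP.
by rewrite Pi ji q1 perm1.
Qed.

End DisjointUnion.

Lemma has_dist_lab_union (T : finType) (e : rel T) (x0 : T)
    (econn : forall x y : T, connect e x y) (alpha k : nat) :
  has_dist_lab (union_rel (a := alpha) e) k <-> alpha <= D_count e k.
Proof.
split.
- case/existsP => Phi PhiD; apply/D_count_geP; exists (copy_lab Phi); split.
  + exact: distinguishing_copy.
  + exact: copy_lab_equiv_inj.
- case/D_count_geP => f [fD fI]; pose Phi := [ffun u : 'I_alpha * T => f u.1 u.2].
  have copyE i : copy_lab Phi i = f i by apply/ffunP => x; rewrite !ffunE.
  apply/existsP; exists Phi; apply: distinguishing_of_copies => // [i | i j].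
  + by rewrite copyE.
  + by rewrite !copyE; exact: fI.
Qed.

Lemma is_min_equiv (P Q : nat -> Prop) m :
  (forall k, P k <-> Q k) -> is_min P m <-> is_min Q m.
Proof.
move=> PQ; split=> -[Pm Pmin]; split=> [| k /PQ]; by [apply/PQ | apply: Pmin].
Qed.

Theorem lemma3 (T : finType) (e : rel T) (x0 : T)
    (esym : symmetric e) (eirr : irreflexive e)
    (econn : forall x y : T, connect e x y)
    (alpha : nat) (halpha : 1 <= alpha) :
  forall m : nat,
    is_min (fun k => has_dist_lab (@union_rel alpha T e) k) m <->
    is_min (fun k => alpha <= D_count e k) m.
Proof. by move=> m; apply: is_min_equiv => k; exact: has_dist_lab_union. Qed.
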